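(* Let $\mathbb X=\langle X,\rho\rangle$ be a countable structure with $\rho$ an equivalence relation whose classes are countably infinitely many singletons together with exactly one class of size $i$ for each $i\ge2$; and let $\mathbb Y=\langle Y,\sigma\rangle$ be a countable structure with $\sigma$ an equivalence relation whose classes are countably infinitely many singletons together with exactly one further class, which is countably infinite. Then $\mathbb X\equiv_{\mathcal P}\mathbb Y$, $\mathbb X\not\equiv_{\mathcal P_{\infty\omega}}\mathbb Y$, and $\mathbb X\not\equiv\mathbb Y$.
   Context: The language has one binary relation symbol $R$. $\equiv$ is first order elementary equivalence. $\mathcal P_0$ consists of all atomic formulas ($v_\alpha=v_\beta$, $R(v_\alpha,v_\beta)$) and all $\neg\,v_\alpha=v_\beta$; $\mathcal P$ is the closure of $\mathcal P_0$ under finite conjunctions, finite disjunctions, $\forall v$ and $\exists v$ (no negation), and $\mathcal P_{\infty\omega}$ is the closure of $\mathcal P_0$ under $\forall v$, $\exists v$ and conjunctions and disjunctions of arbitrary sets of formulas (no negation). For a class $\mathcal F$, $\mathbb X\equiv_{\mathcal F}\mathbb Y$ means $\mathbb X,\mathbb Y$ satisfy the same sentences of $\mathcal F$. *)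

From Stdlib Require Import List.
Import ListNotations.

Inductive fo : Type :=
| FEq  : nat -> nat -> fo
| FRel : nat -> nat -> fo
| FNot : fo -> fo
| FAnd : fo -> fo -> fo
| FOr  : fo -> fo -> fo
| FAll : nat -> fo -> fo
| FEx  : nat -> fo -> fo.

Definition upd {X : Type} (e : nat -> X) (n : nat) (a : X) : nat -> X :=
  fun m => if Nat.eqb m n then a else e m.

Fixpoint fo_free (k : nat) (f : fo) : Prop :=
  match f with
  | FEq n m | FRel n m => k = n \/ k = m
  | FNot g => fo_free k g
  | FAnd g h | FOr g h => fo_free k g \/ fo_free k h
  | FAll n g | FEx n g => k <> n /\ fo_free k g
  end.

Fixpoint fo_sat {X : Type} (R : X -> X -> Prop) (e : nat -> X) (f : fo) : Prop :=
  match f with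
  | FEq n m => e n = e m
  | FRel n m => R (e n) (e m)
  | FNot g => ~ fo_sat R e g
  | FAnd g h => fo_sat R e g /\ fo_sat R e h
  | FOr g h => fo_sat R e g \/ fo_sat R e h
  | FAll n g => forall a : X, fo_sat R (upd e n a) g
  | FEx n g => exists a : X, fo_sat R (upd e n a) g
  end.

Definition fo_sentence (f : fo) : Prop := forall k, ~ fo_free k f.

Definition fo_models {X : Type} (R : X -> X -> Prop) (f : fo) : Prop :=
  forall e : nat -> X, fo_sat R e f.

Definition elem_equiv {X Y : Type} (RX : X -> X -> Prop) (RY : Y -> Y -> Prop) : Prop :=
  forall f, fo_sentence f -> (fo_models RX f <-> fo_models RY f).

Inductive pos : Type :=
| PEq  : nat -> nat -> pos
| PRel : nat -> nat -> pos
| PNeq : nat -> nat -> pos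
| PAnd : pos -> pos -> pos
| POr  : pos -> pos -> pos
| PAll : nat -> pos -> pos
| PEx  : nat -> pos -> pos.

Fixpoint pos_free (k : nat) (f : pos) : Prop :=
  match f with
  | PEq n m | PRel n m | PNeq n m => k = n \/ k = m
  | PAnd g h | POr g h => pos_free k g \/ pos_free k h
  | PAll n g | PEx n g => k <> n /\ pos_free k g
  end.

Fixpoint pos_sat {X : Type} (R : X -> X -> Prop) (e : nat -> X) (f : pos) : Prop :=
  match f with
  | PEq n m => e n = e m
  | PRel n m => R (e n) (e m)
  | PNeq n m => e n <> e m
  | PAnd g h => pos_sat R e g /\ pos_sat R e h
  | POr g h => pos_sat R e g \/ pos_sat R e h
  | PAll n g => forall a : X, pos_sat R (upd e n a) g
  | PEx n g => exists a : X, pos_sat R (upd e n a) g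
  end.

Definition pos_sentence (f : pos) : Prop := forall k, ~ pos_free k f.

Definition pos_models {X : Type} (R : X -> X -> Prop) (f : pos) : Prop :=
  forall e : nat -> X, pos_sat R e f.

Definition pos_equiv {X Y : Type} (RX : X -> X -> Prop) (RY : Y -> Y -> Prop) : Prop :=
  forall f, pos_sentence f -> (pos_models RX f <-> pos_models RY f).

Inductive pinf : Type :=
| IEq  : nat -> nat -> pinf
| IRel : nat -> nat -> pinf
| INeq : nat -> nat -> pinf
| IAnd : forall I : Type, (I -> pinf) -> pinf
| IOr  : forall I : Type, (I -> pinf) -> pinf
| IAll : nat -> pinf -> pinf
| IEx  : nat -> pinf -> pinf.

Fixpoint pinf_free (k : nat) (f : pinf) : Prop :=
  match f with
  | IEq n m | IRel n m | INeq n m => k = n \/ k = m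
  | IAnd J g | IOr J g => exists i : J, pinf_free k (g i)
  | IAll n g | IEx n g => k <> n /\ pinf_free k g
  end.

Fixpoint pinf_sat {X : Type} (R : X -> X -> Prop) (e : nat -> X) (f : pinf) : Prop :=
  match f with
  | IEq n m => e n = e m
  | IRel n m => R (e n) (e m)
  | INeq n m => e n <> e m
  | IAnd J g => forall i : J, pinf_sat R e (g i)
  | IOr J g => exists i : J, pinf_sat R e (g i)
  | IAll n g => forall a : X, pinf_sat R (upd e n a) g
  | IEx n g => exists a : X, pinf_sat R (upd e n a) g
  end.

Definition pinf_sentence (f : pinf) : Prop := forall k, ~ pinf_free k f.

Definition pinf_models {X : Type} (R : X -> X -> Prop) (f : pinf) : Prop :=
  forall e : nat -> X, pinf_sat R e f.

Definition pinf_equiv {X Y : Type} (RX : X -> X -> Prop) (RY : Y -> Y -> Prop) : Prop :=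
  forall f, pinf_sentence f -> (pinf_models RX f <-> pinf_models RY f).

Definition countable (X : Type) : Prop :=
  exists f : X -> nat, forall a b, f a = f b -> a = b.

Definition equivalence_rel {X : Type} (R : X -> X -> Prop) : Prop :=
  (forall x, R x x) /\ (forall x y, R x y -> R y x) /\
  (forall x y z, R x y -> R y z -> R x z).

Definition class_size {X : Type} (R : X -> X -> Prop) (x : X) (n : nat) : Prop :=
  exists l : list X, NoDup l /\ length l = n /\ (forall y, R x y <-> In y l).

Definition class_infinite {X : Type} (R : X -> X -> Prop) (x : X) : Prop :=
  forall l : list X, exists y, R x y /\ ~ In y l.

Definition inf_many_singletons {X : Type} (R : X -> X -> Prop) : Prop :=
  forall l : list X, exists x, class_size R x 1 /\ ~ In x l.

Definition is_X_structure (X : Type) (R : X -> X -> Prop) : Prop :=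
  countable X /\ equivalence_rel R /\
  inf_many_singletons R /\
  (forall i, 2 <= i -> exists x, class_size R x i) /\
  (forall i x y, 2 <= i -> class_size R x i -> class_size R y i -> R x y) /\
  (forall x, exists n, class_size R x n).

Definition is_Y_structure (Y : Type) (S : Y -> Y -> Prop) : Prop :=
  countable Y /\ equivalence_rel S /\
  inf_many_singletons S /\
  exists y0, class_infinite S y0 /\ (forall y, S y y0 \/ class_size S y 1).

From Stdlib Require Import List Lia Arith Classical FunctionalExtensionality.
Import ListNotations.

(** A positive sentence with at most K variables is transferred by a game
    in which assignments on the two sides keep the same equality pattern and
    the same "colour"; when each structure has more than K points of each
    colour, every move can be answered.  Since a positive formula asserts [R]
    but never its negation, [R] transfers provided distinct related points of
    the source are coloured and the coloured points of the target form one
    class.  From X to Y colour the points of non-trivial classes of X and the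
    infinite class of Y; from Y to X colour the infinite class of Y and one
    class of X of size K + 2.

    The infinitary positive sentence "some point has n distinct neighbours
    for every n" holds in Y but not in X, whose classes are finite; the
    first-order sentence "some class has exactly two elements" holds in X
    but not in Y. *)

Lemma upd_eq {T} (e : nat -> T) n a : upd e n a n = a.
Proof. unfold upd; now rewrite Nat.eqb_refl. Qed.

Lemma upd_neq {T} (e : nat -> T) n m a : m <> n -> upd e n a m = e m.
Proof. intro Hmn; unfold upd; destruct (Nat.eqb_spec m n); congruence. Qed.

Lemma upd_id {T} (e : nat -> T) n : upd e n (e n) = e.
Proof.
  apply functional_extensionality; intro m; unfold upd.
  destruct (Nat.eqb_spec m n); congruence.
Qed.

Fixpoint pos_vars (f : pos) : list nat :=
  match f with
  | PEq n m | PRel n m | PNeq n m => [n; m]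
  | PAnd g h | POr g h => pos_vars g ++ pos_vars h
  | PAll _ g | PEx _ g => pos_vars g
  end.

Definition more_than {A} (K : nat) (P : A -> Prop) : Prop :=
  forall l : list A, length l <= K -> exists a, P a /\ ~ In a l.

Lemma more_than_mono {A} K (P P' : A -> Prop) :
  (forall a, P a -> P' a) -> more_than K P -> more_than K P'.
Proof. intros HPP' HP l Hl; destruct (HP l Hl) as (a & Ha & Hal); eauto. Qed.

Definition agree {A B} (P : A -> Prop) (Q : B -> Prop) (V : list nat)
    (e : nat -> A) (e' : nat -> B) : Prop :=
  (forall v w, In v V -> In w V -> (e v = e w <-> e' v = e' w)) /\
  (forall v, In v V -> (P (e v) <-> Q (e' v))).

Section Agreement.

Variables (A B : Type) (P : A -> Prop) (Q : B -> Prop).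

Lemma agree_incl V W e e' : incl V W -> agree P Q W e e' -> agree P Q V e e'.
Proof. intros HVW [Heq HPQ]; split; auto. Qed.

Lemma agree_sym V e e' : agree P Q V e e' -> agree Q P V e' e.
Proof. intros [Heq HPQ]; split; intros; symmetry; auto. Qed.

Lemma agree_upd V n e e' a b :
  agree P Q V e e' -> (P a <-> Q b) ->
  (forall w, In w V -> w <> n -> (e w = a <-> e' w = b)) ->
  agree P Q (n :: V) (upd e n a) (upd e' n b).
Proof.
  intros [Heq HPQ] Hab Hn.
  assert (HV : forall v, In v (n :: V) -> v <> n -> In v V)
    by (intros v [->|Hv] Hvn; tauto).
  split.
  - intros v w Hv Hw; unfold upd.
    destruct (Nat.eqb_spec v n) as [Hvn|Hvn], (Nat.eqb_spec w n) as [Hwn|Hwn].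
    + tauto.
    + specialize (Hn w (HV w Hw Hwn) Hwn); split; intro E; symmetry; apply Hn; auto.
    + specialize (Hn v (HV v Hv Hvn) Hvn); tauto.
    + auto.
  - intros v Hv; unfold upd; destruct (Nat.eqb_spec v n); auto.
Qed.

(* Either [a] already occurs among the values at [V], and its partner is used,
   or [a] is new and is matched by a new element of the same colour. *)
Lemma agree_upd_forth K V n e e' a :
  more_than K Q -> more_than K (fun b => ~ Q b) -> length V <= K ->
  agree P Q V e e' -> exists b, agree P Q (n :: V) (upd e n a) (upd e' n b).
Proof.
  intros HQ HnQ HK HI.
  destruct (classic (exists w, In w V /\ w <> n /\ e w = a))
    as [(w & Hw & Hwn & <-) | Hnew].
  - exists (e' w); apply agree_upd; [exact HI | now apply HI |].
    intros u Hu _; now apply HI.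
  - assert (Hb : exists b, (P a <-> Q b) /\ ~ In b (map e' V)).
    { rewrite <- length_map with (f := e') in HK.
      destruct (classic (P a)) as [Pa|nPa];
        [destruct (HQ _ HK) as (b & Qb & Hb) | destruct (HnQ _ HK) as (b & Qb & Hb)];
        exists b; tauto. }
    destruct Hb as (b & Hab & Hb); exists b; apply agree_upd; auto.
    intros w Hw Hwn; split; intro Hwb; exfalso.
    + eauto.
    + apply Hb; rewrite <- Hwb; now apply in_map.
Qed.

End Agreement.

Lemma agree_upd_back {A B} (P : A -> Prop) (Q : B -> Prop) K V n e e' b :
  more_than K P -> more_than K (fun a => ~ P a) -> length V <= K ->
  agree P Q V e e' -> exists a, agree P Q (n :: V) (upd e n a) (upd e' n b).
Proof.
  intros HP HnP HK HI.
  destruct (agree_upd_forth _ _ Q P K V n e' e b HP HnP HK (agree_sym _ _ _ _ _ _ _ HI))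
    as [a Ha].
  exists a; now apply agree_sym.
Qed.

Lemma agree_exists {A B} (P : A -> Prop) (Q : B -> Prop) K V e' :
  more_than K P -> more_than K (fun a => ~ P a) -> length V <= K ->
  exists e, agree P Q V e e'.
Proof.
  intros HP HnP; induction V as [|v V IH]; simpl; intro HK.
  - destruct (HP [] (Nat.le_0_l K)) as [a _].
    exists (fun _ => a); split; intros v; contradiction.
  - destruct IH as [e He]; [lia|].
    destruct (agree_upd_back P Q K V v e e' (e' v) HP HnP ltac:(lia) He) as [a Ha].
    rewrite upd_id in Ha; eauto.
Qed.

Section Transfer.

Variables (A B : Type) (RA : A -> A -> Prop) (RB : B -> B -> Prop).
Variables (P : A -> Prop) (Q : B -> Prop) (K : nat).
Hypothesis RA_distinct_P : forall x y, RA x y -> x <> y -> P x /\ P y.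
Hypothesis RB_refl : forall y, RB y y.
Hypothesis RB_Q_clique : forall y y', Q y -> Q y' -> RB y y'.
Hypotheses (HP : more_than K P) (HnP : more_than K (fun a => ~ P a)).
Hypotheses (HQ : more_than K Q) (HnQ : more_than K (fun b => ~ Q b)).

Lemma pos_sat_agree f V e e' :
  incl (pos_vars f) V -> length V <= K -> agree P Q V e e' ->
  pos_sat RA e f -> pos_sat RB e' f.
Proof.
  revert V e e'.
  induction f as [n m|n m|n m|g IHg h IHh|g IHg h IHh|n g IH|n g IH];
    simpl; intros V e e' Hvars HK HI.
  - apply HI; auto; apply Hvars; simpl; auto.
  - assert (Hn : In n V) by (apply Hvars; simpl; auto).
    assert (Hm : In m V) by (apply Hvars; simpl; auto).
    intro Hrel; destruct (classic (e n = e m)) as [E|E].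
    + apply HI in E; auto; rewrite E; apply RB_refl.
    + destruct (RA_distinct_P _ _ Hrel E).
      apply RB_Q_clique; apply HI; auto.
  - intros Hne E; apply Hne, HI; auto; apply Hvars; simpl; auto.
  - apply incl_app_inv in Hvars as [Hg Hh].
    intros [Sg Sh]; split; [eapply IHg | eapply IHh]; eauto.
  - apply incl_app_inv in Hvars as [Hg Hh].
    intros [Sg|Sh]; [left; eapply IHg | right; eapply IHh]; eauto.
  - intros S b.
    destruct (agree_upd_back P Q K V n e e' b HP HnP HK HI) as [a Ha].
    apply (IH V (upd e n a)); auto.
    apply (agree_incl _ _ _ _ V (n :: V)); [apply incl_tl, incl_refl | exact Ha].
  - intros [a S].
    destruct (agree_upd_forth _ _ P Q K V n e e' a HQ HnQ HK HI) as [b Hb].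
    exists b; apply (IH V (upd e n a)); auto.
    apply (agree_incl _ _ _ _ V (n :: V)); [apply incl_tl, incl_refl | exact Hb].
Qed.

Lemma pos_models_transfer f :
  length (pos_vars f) <= K -> pos_models RA f -> pos_models RB f.
Proof.
  intros HK HA e'.
  destruct (agree_exists P Q K (pos_vars f) e' HP HnP HK) as [e He].
  exact (pos_sat_agree f _ e e' (incl_refl _) HK He (HA e)).
Qed.

End Transfer.

Lemma NoDup_exists_not_In {T} (l L : list T) :
  NoDup l -> length L < length l -> exists x, In x l /\ ~ In x L.
Proof.
  intros Hnd Hlt; apply NNPP; intro Hno.
  assert (Hincl : incl l L) by (intros x Hx; apply NNPP; eauto).
  pose proof (NoDup_incl_length Hnd Hincl); lia.
Qed.

Section Classes.

Variables (T : Type) (R : T -> T -> Prop).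
Hypotheses (R_refl : forall x, R x x) (R_sym : forall x y, R x y -> R y x).
Hypothesis R_trans : forall x y z, R x y -> R y z -> R x z.

Lemma singleton_class_eq x y : class_size R x 1 -> R x y -> y = x.
Proof.
  intros (l & _ & Hl & Hiff) Hxy.
  destruct l as [|z [|z' l]]; simpl in Hl; try lia.
  pose proof (proj1 (Hiff x) (R_refl x)); pose proof (proj1 (Hiff y) Hxy).
  simpl in *; intuition congruence.
Qed.

Lemma class_size_unique x n m : class_size R x n -> class_size R x m -> n = m.
Proof.
  intros (l & Hl & <- & Hiff) (l' & Hl' & <- & Hiff').
  assert (Hll' : incl l l') by (intros y Hy; apply Hiff', Hiff, Hy).
  assert (Hl'l : incl l' l) by (intros y Hy; apply Hiff, Hiff', Hy).
  pose proof (NoDup_incl_length Hl Hll'); pose proof (NoDup_incl_length Hl' Hl'l); lia.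
Qed.

Lemma class_size_rel x y n : R x y -> class_size R y n -> class_size R x n.
Proof.
  intros Hxy (l & Hl & Hlen & Hiff); exists l; split; [|split]; auto.
  intro z; rewrite <- Hiff; split; eauto.
Qed.

Lemma class_infinite_rel x y : R x y -> class_infinite R y -> class_infinite R x.
Proof.
  intros Hxy Hinf l; destruct (Hinf l) as (z & Hz & Hzl); eauto.
Qed.

Lemma class_infinite_not_size x n : class_infinite R x -> ~ class_size R x n.
Proof.
  intros Hinf (l & _ & _ & Hiff); destruct (Hinf l) as (y & Hy & Hyl).
  now apply Hyl, Hiff.
Qed.

Lemma singleton_not_in_class c a n :
  n <> 1 -> class_size R c n -> class_size R a 1 -> ~ R c a.
Proof.
  intros Hn Hc Ha Hca; apply Hn, (class_size_unique c); auto.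
  now apply (class_size_rel c a).
Qed.

Lemma singleton_not_in_infinite_class c a :
  class_infinite R c -> class_size R a 1 -> ~ R c a.
Proof.
  intros Hc Ha Hca; apply (class_infinite_not_size c 1 Hc).
  now apply (class_size_rel c a).
Qed.

Lemma class_size_more_than c n K : K < n -> class_size R c n -> more_than K (R c).
Proof.
  intros HK (L & HL & <- & Hiff) l Hl.
  destruct (NoDup_exists_not_In L l HL) as (a & HaL & Hal); [lia|].
  exists a; split; [apply Hiff|]; auto.
Qed.

Lemma class_size_more_than_nontrivial c n K :
  K + 2 <= n -> class_size R c n -> more_than K (fun a => exists y, R a y /\ y <> a).
Proof.
  intros HK Hc l Hl.
  destruct (class_size_more_than c n K ltac:(lia) Hc l Hl) as (a & Ha & Hal).
  destruct (class_size_more_than c n 1 ltac:(lia) Hc [a] (le_n 1)) as (y & Hy & Hya).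
  exists a; split; [exists y; split|]; eauto.
  intros ->; apply Hya; now left.
Qed.

End Classes.

Lemma class_infinite_more_than {T} (R : T -> T -> Prop) c K :
  class_infinite R c -> more_than K (R c).
Proof. intros Hc l _; apply Hc. Qed.

Lemma inf_many_singletons_more_than {T} (R : T -> T -> Prop) K :
  inf_many_singletons R -> more_than K (fun x => class_size R x 1).
Proof. intros Hs l _; apply Hs. Qed.

Definition fresh_related (k : nat) : pinf :=
  IAnd nat (fun i => if i <? k then INeq (S k) (S i) else IRel 0 (S k)).

(* [related_distinct k n]: there are [v_(k+1), ..., v_(k+n)], pairwise
   distinct and distinct from [v_1, ..., v_k], all [R]-related to [v_0].
   [IEq 0 0] serves as the true formula. *)
Fixpoint related_distinct (k n : nat) : pinf :=
  match n with
  | 0 => IEq 0 0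
  | S n => IEx (S k) (IAnd bool (fun b =>
             if b then fresh_related k else related_distinct (S k) n))
  end.

Definition infinite_class_sentence : pinf :=
  IEx 0 (IAnd nat (related_distinct 0)).

Lemma pinf_sat_fresh_related {T} (R : T -> T -> Prop) e k :
  pinf_sat R e (fresh_related k) <->
  R (e 0) (e (S k)) /\ forall i, i < k -> e (S k) <> e (S i).
Proof.
  simpl; split.
  - intro H; split.
    + specialize (H k); now rewrite Nat.ltb_irrefl in H.
    + intros i Hi; specialize (H i); now apply Nat.ltb_lt in Hi; rewrite Hi in H.
  - intros [Hrel Hne] i; destruct (Nat.ltb_spec i k); simpl; auto.
Qed.

Lemma pinf_sat_related_distinct_S {T} (R : T -> T -> Prop) e k n :
  pinf_sat R e (related_distinct k (S n)) <->
  exists a, pinf_sat R (upd e (S k) a) (fresh_related k) /\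
            pinf_sat R (upd e (S k) a) (related_distinct (S k) n).
Proof.
  simpl; split; intros [a H]; exists a.
  - exact (conj (H true) (H false)).
  - intros []; [exact (proj1 H) | exact (proj2 H)].
Qed.

Lemma related_distinct_free j k n : pinf_free j (related_distinct k n) -> j <= k.
Proof.
  revert k; induction n as [|n IH]; simpl; intros k.
  - lia.
  - intros [Hj [[] Hfree]].
    + destruct Hfree as [i Hi]; destruct (Nat.ltb_spec i k); simpl in Hi; lia.
    + apply IH in Hfree; lia.
Qed.

Lemma infinite_class_sentence_closed : pinf_sentence infinite_class_sentence.
Proof.
  intros j [Hj [n Hn]]; apply related_distinct_free in Hn; lia.
Qed.

Lemma class_infinite_sat_related_distinct {T} (R : T -> T -> Prop) n :
  forall k e, class_infinite R (e 0) -> pinf_sat R e (related_distinct k n).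
Proof.
  induction n as [|n IH]; intros k e He0; [reflexivity|].
  apply pinf_sat_related_distinct_S.
  destruct (He0 (map (fun i => e (S i)) (seq 0 k))) as (a & Ha & Hal).
  exists a; split; [|apply IH; exact He0].
  apply pinf_sat_fresh_related; rewrite !upd_eq; simpl; split; [exact Ha|].
  intros i Hi; rewrite upd_neq by lia; intros ->.
  apply Hal, (in_map (fun i => e (S i))), in_seq; lia.
Qed.

Lemma pinf_sat_related_distinct_witnesses {T} (R : T -> T -> Prop) n :
  forall k e, pinf_sat R e (related_distinct k n) ->
  exists l, NoDup l /\ length l = n /\
    forall y, In y l -> R (e 0) y /\ forall i, i < k -> y <> e (S i).
Proof.
  induction n as [|n IH]; intros k e H.
  - exists []; split; [constructor | split; [reflexivity | intros y []]].
  - apply pinf_sat_related_distinct_S in H as (a & Hfresh & Hrest).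
    apply pinf_sat_fresh_related in Hfresh; rewrite !upd_eq in Hfresh.
    destruct Hfresh as [Ha Hane]; simpl in Ha.
    destruct (IH _ _ Hrest) as (l & Hnd & Hlen & Hl).
    assert (Hl' : forall y, In y l -> R (e 0) y /\ y <> a /\ forall i, i < k -> y <> e (S i)).
    { intros y Hy; destruct (Hl y Hy) as [Hy0 Hyi]; simpl in Hy0.
      pose proof (Hyi k (Nat.lt_succ_diag_r k)) as Hya; rewrite upd_eq in Hya.
      repeat split; auto.
      intros i Hi; specialize (Hyi i ltac:(lia)); rewrite upd_neq in Hyi by lia; auto. }
    exists (a :: l); split; [|split].
    + constructor; auto; intro Hin; now apply (Hl' a Hin).
    + simpl; lia.
    + intros y [<-|Hy]; [split; [exact Ha|] | apply Hl' in Hy; tauto].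
      intros i Hi; specialize (Hane i Hi); rewrite upd_neq in Hane by lia; auto.
Qed.

Lemma class_size_not_sat_related_distinct {T} (R : T -> T -> Prop) e N :
  class_size R (e 0) N -> ~ pinf_sat R e (related_distinct 0 (S N)).
Proof.
  intros (L & _ & <- & Hiff) H.
  destruct (pinf_sat_related_distinct_witnesses R _ 0 e H) as (l & Hnd & Hlen & Hl).
  assert (Hincl : incl l L) by (intros y Hy; apply Hiff, Hl, Hy).
  pose proof (NoDup_incl_length Hnd Hincl); lia.
Qed.

Definition pair_class_sentence : fo :=
  FEx 0 (FEx 1 (FAnd (FNot (FEq 0 1)) (FAnd (FRel 0 1)
    (FAll 2 (FOr (FNot (FRel 0 2)) (FOr (FEq 2 0) (FEq 2 1))))))).

Lemma pair_class_sentence_closed : fo_sentence pair_class_sentence.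
Proof. intros k Hk; simpl in Hk; lia. Qed.

Lemma fo_sat_pair_class_size {T} (R : T -> T -> Prop) e :
  (forall x, R x x) -> fo_sat R e pair_class_sentence -> exists x, class_size R x 2.
Proof.
  intros R_refl (x & y & Hne & Hxy & Hall); unfold upd in *; simpl in *.
  exists x, [x; y]; split; [|split; [reflexivity|]].
  - repeat constructor; simpl; intuition.
  - intro z; simpl; split.
    + intro Hxz; destruct (Hall z) as [H|[H|H]]; auto; contradiction.
    + intros [<-|[<-|[]]]; auto.
Qed.

Lemma class_size_2_fo_sat_pair_class {T} (R : T -> T -> Prop) c e :
  (forall x y, R x y -> R y x) -> (forall x y z, R x y -> R y z -> R x z) ->
  class_size R c 2 -> fo_sat R e pair_class_sentence.
Proof.
  intros R_sym R_trans ([|p [|q [|]]] & Hnd & Hlen & Hiff); try discriminate.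
  assert (Hcp : R c p) by (apply Hiff; simpl; auto).
  assert (Hcq : R c q) by (apply Hiff; simpl; auto).
  exists p, q; unfold upd; simpl; repeat split.
  - intros ->; inversion Hnd; simpl in *; tauto.
  - eauto.
  - intro a; destruct (classic (R p a)) as [Hpa|Hpa]; [right|now left].
    assert (Hca : In a [p; q]) by (apply Hiff; eauto).
    simpl in Hca; intuition.
Qed.

Lemma pos_models_X_Y X rho Y sigma f :
  is_X_structure X rho -> is_Y_structure Y sigma ->
  pos_models rho f -> pos_models sigma f.
Proof.
  intros (_ & (rR & rS & rT) & sgX & sizeX & _)
         (_ & (sR & sS & sT) & sgY & y0 & Hy0 & _).
  set (K := length (pos_vars f)).
  destruct (sizeX (K + 2)) as [c Hc]; [lia|].
  apply (pos_models_transfer _ _ rho sigma (fun a => exists y, rho a y /\ y <> a)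
           (sigma y0) K); auto.
  - intros x y Hxy Hne; split; [exists y | exists x]; auto.
  - eauto.
  - exact (class_size_more_than_nontrivial _ rho rS rT c (K + 2) K (le_n _) Hc).
  - apply (more_than_mono _ (fun a => class_size rho a 1));
      [|now apply inf_many_singletons_more_than].
    intros a Ha (y & Hay & Hne); exact (Hne (singleton_class_eq _ rho rR a y Ha Hay)).
  - now apply class_infinite_more_than.
  - apply (more_than_mono _ (fun b => class_size sigma b 1));
      [|now apply inf_many_singletons_more_than].
    intro b; exact (singleton_not_in_infinite_class _ sigma sS sT y0 b Hy0).
Qed.

Lemma pos_models_Y_X X rho Y sigma f :
  is_X_structure X rho -> is_Y_structure Y sigma ->
  pos_models sigma f -> pos_models rho f.
Proof.
  intros (_ & (rR & rS & rT) & sgX & sizeX & _)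
         (_ & (sR & sS & sT) & sgY & y0 & Hy0 & Hcl).
  set (K := length (pos_vars f)).
  destruct (sizeX (K + 2)) as [c Hc]; [lia|].
  apply (pos_models_transfer _ _ sigma rho (sigma y0) (rho c) K); auto.
  - assert (Hbig : forall x y, sigma x y -> x <> y -> sigma y0 x).
    { intros x y Hxy Hne; destruct (Hcl x) as [Hx|Hx]; [now apply sS|].
      exfalso; exact (Hne (eq_sym (singleton_class_eq _ sigma sR x y Hx Hxy))). }
    intros x y Hxy Hne; split; [apply (Hbig x y) | apply (Hbig y x)]; auto.
  - eauto.
  - now apply class_infinite_more_than.
  - apply (more_than_mono _ (fun b => class_size sigma b 1));
      [|now apply inf_many_singletons_more_than].
    intro b; exact (singleton_not_in_infinite_class _ sigma sS sT y0 b Hy0).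
  - exact (class_size_more_than _ rho c (K + 2) K ltac:(lia) Hc).
  - apply (more_than_mono _ (fun a => class_size rho a 1));
      [|now apply inf_many_singletons_more_than].
    intro a; exact (singleton_not_in_class _ rho rS rT c a (K + 2) ltac:(lia) Hc).
Qed.

Lemma Y_models_infinite_class Y sigma :
  is_Y_structure Y sigma -> pinf_models sigma infinite_class_sentence.
Proof.
  intros (_ & _ & _ & y0 & Hy0 & _) e; exists y0; intro n.
  apply class_infinite_sat_related_distinct; now rewrite upd_eq.
Qed.

Lemma X_not_models_infinite_class X rho :
  is_X_structure X rho -> ~ pinf_models rho infinite_class_sentence.
Proof.
  intros (_ & _ & sgX & _ & _ & finX) H.
  destruct (sgX []) as [c _].
  destruct (H (fun _ => c)) as [x Hx]; destruct (finX x) as [N HN].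
  apply (class_size_not_sat_related_distinct rho (upd (fun _ => c) 0 x) N);
    [now rewrite upd_eq | apply Hx].
Qed.

Lemma X_models_pair_class X rho :
  is_X_structure X rho -> fo_models rho pair_class_sentence.
Proof.
  intros (_ & (rR & rS & rT) & _ & sizeX & _) e.
  destruct (sizeX 2 (le_n 2)) as [c Hc].
  exact (class_size_2_fo_sat_pair_class rho c e rS rT Hc).
Qed.

Lemma Y_not_models_pair_class Y sigma :
  is_Y_structure Y sigma -> ~ fo_models sigma pair_class_sentence.
Proof.
  intros (_ & (sR & sS & sT) & _ & y0 & Hy0 & Hcl) H.
  destruct (fo_sat_pair_class_size sigma (fun _ => y0) sR (H _)) as [y Hy].
  destruct (Hcl y) as [Hyy0|Hsingle].
  - exact (class_infinite_not_size _ sigma y 2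
             (class_infinite_rel _ sigma sT y y0 Hyy0 Hy0) Hy).
  - discriminate (class_size_unique _ sigma y 1 2 Hsingle Hy).
Qed.

Theorem mainTheorem18 (X : Type) (rho : X -> X -> Prop)
  (Y : Type) (sigma : Y -> Y -> Prop) :
  is_X_structure X rho -> is_Y_structure Y sigma ->
  pos_equiv rho sigma /\ ~ pinf_equiv rho sigma /\ ~ elem_equiv rho sigma.
Proof.
  intros HX HY; split; [|split].
  - intros f _; split; [apply pos_models_X_Y | apply pos_models_Y_X]; assumption.
  - intro Heq; apply (X_not_models_infinite_class X rho HX).
    apply (Heq _ infinite_class_sentence_closed), (Y_models_infinite_class Y sigma HY).
  - intro Heq; apply (Y_not_models_pair_class Y sigma HY).
    apply (Heq _ pair_class_sentence_closed), (X_models_pair_class X rho HX).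
Qed.
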